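(* Let $k \geq 2$, let $\Delta_k = \{\mathbf{c} \in [0,1]^k : \sum_{i=1}^k c_i = 1\}$, and fix a point $\mathbf{x}$ with conditional class distribution $(p(1|\mathbf{x}),\dots,p(k|\mathbf{x})) \in \Delta_k$ such that $y^* = \arg\max_y p(y|\mathbf{x})$ is unique. Let $q>1$ and consider $$R_{\mathrm{GCE}}(\mathbf{c}) = \sum_{y=1}^k p(y|\mathbf{x})\,\frac{1-c_y^q}{q}, \qquad \mathbf{c} \in \Delta_k.$$ Then the minimizer $f^*_{\mathrm{GCE}}(\mathbf{x})$ of $R_{\mathrm{GCE}}$ over $\Delta_k$ is $\mathbf{e}^{(y^* )}$, where $\mathbf{e}^{(t)}$ denotes the one-hot vector with $\mathbf{e}^{(t)}_j = 1$ iff $j=t$.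
   Context: This is a $k$-class classification setting: a classifier $f$ maps inputs $\mathbf{x}$ to the probability simplex $\Delta_k$, and $p(y|\mathbf{x})$ is the class posterior. The generalized cross entropy loss is $L_{\mathrm{GCE}}(f(\mathbf{x}),y) = \frac{1-f_y(\mathbf{x})^q}{q}$, here used with $q>1$. The optimal classifier $f^*_{\mathrm{GCE}}$ is taken to minimize the pointwise risk $\sum_y L_{\mathrm{GCE}}(f(\mathbf{x}),y)\,p(y|\mathbf{x})$ separately for each $\mathbf{x}$. *)

From HB Require Import structures.
From mathcomp Require Import all_boot all_order all_algebra.
From mathcomp Require Import all_classical all_reals all_analysis.
Set Implicit Arguments. Unset Strict Implicit. Unset Printing Implicit Defensive.
Import Order.TTheory GRing.Theory Num.Theory.
Local Open Scope ring_scope.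

Definition in_simplex (R : realType) (k : nat) (c : 'I_k -> R) : Prop :=
  (forall i, 0 <= c i <= 1) /\ \sum_(i < k) c i = 1.

Definition onehot (R : realType) (k : nat) (t : 'I_k) : 'I_k -> R :=
  fun j => if j == t then 1 else 0.

Definition R_GCE (R : realType) (k : nat) (p : 'I_k -> R) (q : R)
  (c : 'I_k -> R) : R :=
  \sum_(y < k) p y * ((1 - c y `^ q) / q).

(** Since [0 <= c_y <= 1] and [q > 1], [c_y^q <= c_y], so the expected score
    [sum_y p_y c_y^q] is at most the linear score [sum_y p_y c_y], which on the
    simplex is at most [max_y p_y = p_{y*}]; the one-hot vector at [y*] attains
    this bound.  Minimising [R_GCE] is maximising the score, and equality in the
    linear bound forces all the mass of [c] onto the unique maximiser [y*]. *)
From HB Require Import structures.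
From mathcomp Require Import all_boot all_order all_algebra.
From mathcomp Require Import all_classical all_reals all_analysis.
Set Implicit Arguments.
Unset Strict Implicit.
Unset Printing Implicit Defensive.

Import Order.TTheory GRing.Theory Num.Theory.
Local Open Scope ring_scope.

Lemma onehot_in_simplex (R : realType) (k : nat) (t : 'I_k) :
  in_simplex (onehot R t).
Proof.
split=> [i|]; first by rewrite /onehot; case: (i == t); rewrite ?ler01 ?lexx.
by rewrite (bigD1 t) //= big1 ?addr0 /onehot ?eqxx // => i /negbTE ->.
Qed.

Section LinearScoreOnSimplex.
Variables (R : realType) (k : nat) (p : 'I_k -> R) (t : 'I_k).
Hypothesis p_max : forall y, y != t -> p y < p t.

Let p_le_max y : p y <= p t.
Proof. by have [->|/p_max/ltW] := eqVneq y t. Qed.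

Lemma sum_mul_le_max (c : 'I_k -> R) : in_simplex c ->
  \sum_(y < k) p y * c y <= p t.
Proof.
move=> [c01 c1]; rewrite -[p t]mulr1 -c1 mulr_sumr; apply: ler_sum => y _.
by apply: ler_wpM2r; [case/andP: (c01 y) | exact: p_le_max].
Qed.

Lemma sum_mul_eq_max (c : 'I_k -> R) : in_simplex c ->
  \sum_(y < k) p y * c y = p t -> c = onehot R t.
Proof.
move=> [c01 c1] c_eq.
have gap_ge0 y : 0 <= (p t - p y) * c y.
  by rewrite mulr_ge0 ?subr_ge0 ?p_le_max //; case/andP: (c01 y).
have gap_sum0 : \sum_(y < k) (p t - p y) * c y = 0.
  under eq_bigr do rewrite mulrBl.
  by rewrite sumrB -mulr_sumr c1 mulr1 c_eq subrr.
have c_off y : y != t -> c y = 0.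
  move=> yt; have /eqP := psumr_eq0P (fun i _ => gap_ge0 i) gap_sum0 (i := y) isT.
  by rewrite mulf_eq0 subr_eq0 (gt_eqF (p_max yt)) => /eqP.
apply: funext => y; rewrite /onehot; case: eqVneq => [->|/c_off //].
by move: c1; rewrite (bigD1 t) //= big1 ?addr0 // => i /c_off.
Qed.

End LinearScoreOnSimplex.

Definition gce_score (R : realType) (k : nat) (p : 'I_k -> R) (q : R)
  (c : 'I_k -> R) : R :=
  \sum_(y < k) p y * c y `^ q.

Lemma R_GCE_score (R : realType) (k : nat) (p c : 'I_k -> R) (q : R) :
  R_GCE p q c = (\sum_(y < k) p y - gce_score p q c) / q.
Proof.
rewrite /R_GCE /gce_score mulrBl !mulr_suml -sumrB.
by apply: eq_bigr => y _; rewrite mulrA mulrBr mulr1 mulrBl.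
Qed.

Lemma gce_score_onehot (R : realType) (k : nat) (p : 'I_k -> R) (q : R)
  (t : 'I_k) : 0 < q -> gce_score p q (onehot R t) = p t.
Proof.
move=> q_gt0; rewrite /gce_score (bigD1 t) //= big1 ?addr0 /onehot ?eqxx.
  by rewrite powR1 mulr1.
by move=> y /negbTE ->; rewrite powR0 ?mulr0 ?gt_eqF.
Qed.

Lemma powR_le_base (R : realType) (a q : R) : 0 <= a <= 1 -> 1 <= q ->
  a `^ q <= a.
Proof.
move=> /andP[a_ge0 a_le1] q_ge1; have [->|a_neq0] := eqVneq a 0.
  by rewrite powR0 // gt_eqF // (lt_le_trans ltr01).
by apply: ge1r_powR; rewrite // a_le1 andbT lt_def a_neq0.
Qed.

Lemma gce_score_le_sum_mul (R : realType) (k : nat) (p c : 'I_k -> R) (q : R) :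
  (forall y, 0 <= p y) -> (forall y, 0 <= c y <= 1) -> 1 <= q ->
  gce_score p q c <= \sum_(y < k) p y * c y.
Proof.
move=> p_ge0 c01 q_ge1; apply: ler_sum => y _.
by rewrite ler_wpM2l ?powR_le_base.
Qed.

Theorem theorem2 (R : realType) (k : nat) (hk : (2 <= k)%N)
  (p : 'I_k -> R) (hp : in_simplex p) (ystar : 'I_k)
  (hmax : forall y : 'I_k, y != ystar -> p y < p ystar)
  (q : R) (hq : 1 < q) :
  in_simplex (onehot R ystar) /\
  (forall c : 'I_k -> R, in_simplex c ->
     R_GCE p q (onehot R ystar) <= R_GCE p q c /\
     (R_GCE p q c = R_GCE p q (onehot R ystar) -> c = onehot R ystar)).
Proof.
have q_gt0 : 0 < q := lt_trans ltr01 hq.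
have p_ge0 y : 0 <= p y by case: hp => /(_ y)/andP[].
split=> [|c c_simplex]; first exact: onehot_in_simplex.
have score_le_sum := gce_score_le_sum_mul p_ge0 c_simplex.1 (ltW hq).
have sum_le_max := sum_mul_le_max hmax c_simplex.
rewrite !R_GCE_score gce_score_onehot //; split.
  by rewrite ler_pM2r ?invr_gt0 // lerD2l lerN2 (le_trans score_le_sum).
move=> /(mulIf (invr_neq0 (lt0r_neq0 q_gt0)))/addrI/oppr_inj score_eq.
apply: (sum_mul_eq_max hmax c_simplex); apply/eqP.
by rewrite eq_le sum_le_max -score_eq score_le_sum.
Qed.
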